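(* Let $\Gamma$ be a countable group acting affinely on $\mathbb{R}^n$, let $\mathsf W\subseteq\mathbb{R}^n$ be a connected open subset, and let $h:\mathsf W\to\mathbb{R}^n$ be a $C^1$ map preserving $\Gamma$-orbits (i.e. $h(x)\in\Gamma\cdot x$ for all $x\in\mathsf W$). Then there is $\gamma\in\Gamma$, acting by $\gamma\cdot x=A_\gamma x+b_\gamma$, such that $h(x)=A_\gamma x+b_\gamma$ for all $x\in\mathsf W$. *)

From HB Require Import structures.
From mathcomp Require Import all_boot all_order all_algebra.
From mathcomp Require Import all_classical all_reals all_analysis.
Import numFieldNormedType.Exports.
Set Implicit Arguments.
Unset Strict Implicit.
Unset Printing Implicit Defensive.
Local Open Scope ring_scope.
Local Open Scope classical_set_scope.

Definition affine_action (R : realType) (n : nat) (G : groupType)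
  (A : G -> 'M[R]_n) (b : G -> 'cV[R]_n) : Prop :=
  A 1%g = 1%:M /\ b 1%g = 0 /\
  (forall g h : G, A (g * h)%g = A g *m A h /\ b (g * h)%g = A g *m b h + b g).

Definition C1_on (R : realType) (n : nat) (W : set 'cV[R]_n)
  (h : 'cV[R]_n -> 'cV[R]_n) : Prop :=
  (forall x, W x -> forall v : 'cV[R]_n, derivable h x v) /\
  (forall v : 'cV[R]_n, forall x, W x -> {for x, continuous ('D_v h)}).

From HB Require Import structures.
From mathcomp Require Import all_boot all_order all_algebra.
From mathcomp Require Import all_classical all_reals all_analysis.
Import numFieldNormedType.Exports.
Local Open Scope ring_scope.
Local Open Scope classical_set_scope.
From mathcomp.algebra_tactics Require Import ring lra.
Import Order.TTheory GRing.Theory Num.Theory.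

(* On a segment x + t w inside W, h is a C^1 curve which at every time agrees
   with one of the countably many affine curves t |-> A g (x + t w) + b g.  The
   times where it agrees with a given one without having the same derivative are
   isolated in the agreement set, hence countable; at all other times the
   derivative and the value minus t times the derivative lie in countable sets,
   so, being continuous, they are constant and h is a single affine map on the
   segment.  Thus every directional derivative D_w h has countable range, hence
   is constant on the connected set W, and it is linear in w: D_w h = M w.  At a
   point x the closed affine sets {w | (A g - M) w = h x - A g x - b g} cover
   R^n, so by Baire one contains a ball, which forces A g = M and
   h x = A g x + b g.  Therefore h - M takes its values among the b g and is
   locally constant, so it is constant on W. *)

Set Implicit Arguments.
Unset Strict Implicit.
Unset Printing Implicit Defensive.

Lemma countable_image (T U : Type) (f : T -> U) (A : set T) :
  countable A -> countable (f @` A).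
Proof. exact: sub_countable (card_image_le f A). Qed.

Lemma countable_setU (T : Type) (A B : set T) :
  countable A -> countable B -> countable (A `|` B).
Proof.
move=> cA cB; have -> : A `|` B = \bigcup_(c in [set: bool]) (if c then A else B).
  apply/seteqP; split => [x [Ax|Bx]|x [[] _ ABx]]; by [exists true|exists false|left|right].
by apply: bigcup_countable => // -[].
Qed.

Section countable_subsets_of_the_line.
Variable R : realType.

Lemma countable_misses_itvoo (a b : R) (S : set R) :
  a < b -> countable S -> exists2 t, a < t < b & ~ S t.
Proof.
move=> ab cS; apply: contrapT => nt.
have : countable [set t | a < t < b].
  apply: sub_countable cS; apply: subset_card_le => t abt.
  by apply: contrapT => nSt; apply: nt; exists t.
rewrite -set_itvoo => /countable_lebesgue_measure0.
by rewrite lebesgue_measure_itv /= lte_fin ab -EFinD => -[] /eqP; rewrite subr_eq0 gt_eqF.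
Qed.

Lemma connected_countable_image_cst (T : topologicalType) (V : normedModType R)
    (S : set T) (f : T -> V) :
  connected S -> (forall x, S x -> {for x, continuous f}) ->
  countable (f @` S) -> forall x y, S x -> S y -> f x = f y.
Proof.
move=> cS cf cfS x y Sx Sy; apply: contrapT => /eqP fxy.
pose d z := `|f z - f x|.
have cd : {within S, continuous d}.
  apply: continuous_in_subspaceT => z /set_mem Sz.
  apply: (@continuous_comp _ _ _ (fun z => f z - f x) Num.norm).
    by apply: cvgB; [exact: cf | exact: cvg_cst].
  exact: norm_continuous.
have /connected_intervalP dS := connected_continuous_connected cS cd.
have cdS : countable (d @` S).
  by rewrite -(image_comp f (fun v => `|v - f x|)); exact: countable_image.
have dy0 : 0 < d y by rewrite normr_gt0 subr_eq0 eq_sym.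
have [t /andP[t0 ty] []] := countable_misses_itvoo dy0 cdS.
apply: (dS (d x) (d y)); [by exists x|by exists y|].
by rewrite /d subrr normr0 !ltW.
Qed.
End countable_subsets_of_the_line.

Lemma Baire_closed_cover (R : realType) (U : completeNormedModType R) (T : Type)
    (C : T -> set U) (D : set U) :
  countable [set: T] -> (forall i, closed (C i)) -> open D -> D !=set0 ->
  D `<=` \bigcup_i C i -> exists i z (e : R), 0 < e /\ ball z e `<=` C i.
Proof.
move=> /Pcountable[J TJ]; move: C; rewrite {T}TJ => C cC oD D0 DC.
apply: contrapT => noball.
pose F k := if choice.unpickle k is Some i then ~` C i else setT.
have odF k : open (F k) /\ dense (F k).
  rewrite /F; case: choice.unpickle => [i|]; last first.
    by split=> [|O O0 _]; [exact: openT | rewrite setIT].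
  split=> [|O [z Oz] oO]; first exact: closed_openC.
  apply/set0P/eqP => OC; apply: noball; exists i, z.
  have /nbhs_ballP[e e0 zeO] : nbhs z O by exact: open_nbhs_nbhs.
  exists e; split => // y /zeO Oy; apply: contrapT => nCy.
  by have : (O `&` ~` C i) y by []; rewrite OC.
have [z [Dz Fz]] := Baire odF D0 oD.
have [i _ Ciz] := DC z Dz.
by have := Fz (choice.pickle i) I; rewrite /F choice.pickleK.
Qed.

Section derivatives.
Variables (R : realType) (U V : normedModType R).

Lemma derive1_limit_point_affine (phi : R -> V) (p q : V) (t : R) :
  derivable phi t 1 -> phi t = p + t *: q ->
  limit_point [set s | phi s = p + s *: q] t -> 'D_1 phi t = q.
Proof.
move=> dphi phit Zt; apply: contrapT => /eqP Dq.
have e0 : 0 < `|'D_1 phi t - q| by rewrite normr_gt0 subr_eq0.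
have /cvgrPdist_lt/(_ _ e0)/nbhs_ballP[d d0 dD] := dphi.
have [s [st Zs tds]] := Zt _ (nbhsx_ballx t _ d0).
have ts0 : s - t != 0 by rewrite subr_eq0.
have := dD (s - t); rewrite -ball_normE /= sub0r normrN distrC.
move=> /(_ tds ts0); rewrite /shift /= -[(s - t)%:A]/((s - t) * 1) mulr1 subrK.
have -> : phi s - phi t = (s - t) *: q.
  by rewrite Zs phit opprD addrACA subrr add0r scalerBl.
by rewrite scalerA mulVf // scale1r ltxx.
Qed.

Lemma derive_affine_line (f : U -> V) (x w : U) (Q : V) (d : R) : 0 < d ->
  (forall t, `|t| < d -> f (x + t *: w) = f x + t *: Q) ->
  derivable f x w /\ 'D_w f x = Q.
Proof.
move=> d0 fQ.
have DQ : (fun s : R => s^-1 *: ((f \o shift x) (s *: w) - f x)) @ 0^' --> Q.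
  apply: cvg_near_cst; apply/nbhs_ballP; exists d => // s.
  rewrite -ball_normE /= sub0r normrN => sd s0.
  by rewrite /shift /= (addrC _ x) fQ // addrAC subrr add0r scalerA mulVf // scale1r.
by split; [exact: cvgP DQ | exact: cvg_lim DQ].
Qed.

Lemma derive1_along_line (f : U -> V) (x w : U) (t : R) :
  'D_1 (fun s : R => f (x + s *: w)) t = 'D_w f (x + t *: w) /\
  (derivable f (x + t *: w) w -> derivable (fun s : R => f (x + s *: w)) t 1).
Proof.
rewrite /derivable /derive /=.
suff -> : (fun s : R => s^-1 *: (f (x + (s%:A + t) *: w) - f (x + t *: w)))
        = (fun s : R => s^-1 *: (f (s *: w + (x + t *: w)) - f (x + t *: w))) by [].
by apply/funext => s; rewrite -[s%:A]/(s * 1) mulr1 scalerDl addrCA addrC.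
Qed.

Lemma affine_cover_line (G : Type) (p q : G -> V) (phi dphi : R -> V) (a b : R) :
  countable [set: G] -> a < b ->
  (forall t, a < t < b -> derivable phi t 1 /\ 'D_1 phi t = dphi t) ->
  (forall t, a < t < b -> {for t, continuous dphi}) ->
  (forall t, a < t < b -> exists g, phi t = p g + t *: q g) ->
  exists g, forall t, a < t < b -> phi t = p g + t *: q g.
Proof.
move=> cG ab phiD dphiC cover.
pose I := [set t | a < t < b].
pose Z g := [set t | phi t = p g + t *: q g].
pose N g := [set t | I t /\ Z g t /\ dphi t != q g].
have NZ g : N g `<=` isolated (Z g).
  move=> t [It [Zt Dt]]; have : closure (Z g) t by exact: subset_closure.
  rewrite closure_isolated_limit_point => -[//|].
  move/(derive1_limit_point_affine (phiD t It).1 Zt).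
  by rewrite (phiD t It).2 => Dq; rewrite Dq eqxx in Dt.
pose NN := \bigcup_(g in [set: G]) N g.
have cNN : countable NN.
  apply: bigcup_countable => // g _.
  exact: sub_countable (subset_card_le (NZ g)) (countable_isolated _).
have cI : connected I.
  by rewrite /I -set_itvoo; apply/connected_intervalP/interval_is_interval.
have cst_on_I (f : R -> V) (r : G -> V) :
    (forall t, I t -> {for t, continuous f}) ->
    (forall t g, I t -> Z g t -> dphi t = q g -> f t = r g) ->
    forall x y, I x -> I y -> f x = f y.
  move=> fC fr; apply: connected_countable_image_cst => //.
  apply: (@sub_countable _ _ _ (r @` setT `|` f @` NN)); last first.
    by apply: countable_setU; exact: countable_image.
  apply: subset_card_le => _ [t It <-].
  have [g Zt] := cover t It.
  have [Dq|Dq] := eqVneq (dphi t) (q g).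
  - by left; exists g => //; rewrite (fr t g It Zt Dq).
  - by right; exists t => //; exists g.
have [t0 It0 NNt0] := countable_misses_itvoo ab cNN.
have [g0 Zt0] := cover t0 It0.
have Dt0 : dphi t0 = q g0.
  by apply: contrapT => /eqP Dq; apply: NNt0; exists g0.
exists g0 => t It.
have Dt : dphi t = q g0.
  by rewrite (cst_on_I dphi q dphiC _ t t0 It It0).
have phiC u : I u -> {for u, continuous phi}.
  move=> Iu; apply: differentiable_continuous; apply/derivable1_diffP.
  exact: (phiD u Iu).1.
have := cst_on_I (fun t => phi t - t *: dphi t) p _ _ t t0 It It0.
rewrite Zt0 Dt0 Dt addrK => <-; first by rewrite subrK.
- move=> u Iu; apply: continuousB; first exact: phiC.
  by apply: continuousZ; [exact: cvg_id | exact: dphiC].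
- by move=> u g _ -> ->; rewrite addrK.
Qed.
End derivatives.

Lemma ball_line_sub (R : numFieldType) (V : normedModType R) (x w : V) (r : R) :
  0 < r -> exists2 d, 0 < d & forall t, `|t| < d -> ball x r (x + t *: w).
Proof.
move=> r0; have w1 : 0 < `|w| + 1 by rewrite ltr_wpDl.
exists (r / (`|w| + 1)) => [|t]; first by rewrite divr_gt0.
rewrite -ball_normE /= opprD addNKr normrN normrZ ltr_pdivlMr // => tr.
by apply: le_lt_trans tr; rewrite ler_wpM2l // lerDl.
Qed.

(* [mx_complete] makes matrices over a completeType a complete uniform space;
   restating it over a realType makes ['M[R]_(m, n)] a completeNormedModType. *)
HB.instance Definition _ (R : realType) m n :=
  Uniform_isComplete.Build 'M[R]_(m, n) (@mx_complete R m n).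

Section matrices.
Variable R : realType.

Lemma mulmx_continuous m k (N : 'M[R]_(m, k)) : continuous (fun w : 'cV[R]_k => N *m w).
Proof.
have -> : (fun w : 'cV[R]_k => N *m w) = (fun w => \sum_(j < k) w j 0 *: col j N).
  apply/funext => w; apply/matrixP => i l.
  rewrite !mxE summxE; apply: eq_bigr => j _.
  by rewrite !mxE (ord1 l) mulrC.
apply: continuous_big => [|j _ w]; first exact: add_continuous.
apply: (@continuousZr_tmp _ _ _ (fun w : 'cV[R]_k => w j 0)).
exact: coord_continuous.
Qed.

Lemma mulmx_cst_on_ball m k (N : 'M[R]_(m, k)) (c : 'cV[R]_m) (z : 'cV[R]_k) (e : R) :
  0 < e -> ball z e `<=` [set w | N *m w = c] -> N = 0 /\ c = 0.
Proof.
move=> e0 zeN; have Nz : N *m z = c by apply: zeN; exact: ballxx.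
suff N0 : N = 0 by split => //; rewrite -Nz N0 mul0mx.
apply/matrixP => i j; have -> : N i j = col j N i 0 by rewrite mxE.
rewrite colE.
have [d d0 zd] := ball_line_sub z (delta_mx j 0) e0.
have d20 : 0 < d / 2 by rewrite divr_gt0.
have /zeN/= : ball z e (z + d / 2 *: delta_mx j 0).
  by apply: zd; rewrite gtr0_norm // ltr_pdivrMr // ltr_pMr // ltr1n.
rewrite mulmxDr Nz -scalemxAr -{2}[c]addr0 => /addrI /eqP.
by rewrite scaler_eq0 (gt_eqF d20) => /eqP ->; rewrite !mxE.
Qed.

Lemma closed_mulmx_eq m k (N : 'M[R]_(m, k)) (c : 'cV[R]_m) :
  closed [set w : 'cV[R]_k | N *m w = c].
Proof.
apply: (@preimage_closed _ _ (fun w : 'cV[R]_k => N *m w) [set c]).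
  by move=> w _; exact: mulmx_continuous.
exact/accessible_closed_set1/hausdorff_accessible/norm_hausdorff.
Qed.
End matrices.

Section orbit_preserving_maps.
Variables (R : realType) (n : nat) (G : Type) (A : G -> 'M[R]_n) (b : G -> 'cV[R]_n).
Variables (W : set 'cV[R]_n) (h : 'cV[R]_n -> 'cV[R]_n).
Hypotheses (cG : countable [set: G]) (oW : open W) (cW : connected W) (C1 : C1_on W h).
Hypothesis h_orbit : forall x, W x -> exists g, h x = A g *m x + b g.

Lemma W_ball x : W x -> exists2 r, 0 < r & ball x r `<=` W.
Proof. by move=> Wx; apply/nbhs_ballP; exact: open_nbhs_nbhs. Qed.

Lemma W_line x w : W x -> exists2 d, 0 < d & forall t, `|t| < d -> W (x + t *: w).
Proof.
move=> /W_ball[r r0 xrW]; have [d d0 xdr] := ball_line_sub x w r0.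
by exists d => // t /xdr /xrW.
Qed.

Lemma affine_on_segment x w d : 0 < d -> (forall t, `|t| < d -> W (x + t *: w)) ->
  exists g, forall t, `|t| < d -> h (x + t *: w) = A g *m (x + t *: w) + b g.
Proof.
move=> d0 xdW.
have [|t|t|t|g hg] := @affine_cover_line _ _ _ (fun g => A g *m x + b g)
  (fun g => A g *m w) (fun t => h (x + t *: w)) (fun t => 'D_w h (x + t *: w))
  (- d) d cG; first by rewrite gtrN.
- rewrite -ltr_norml => /xdW Wt; have [-> Dt] := derive1_along_line h x w t.
  by split => //; apply: Dt; exact: C1.1.
- rewrite -ltr_norml => /xdW Wt.
  apply: (@continuous_comp _ _ _ (fun t : R => x + t *: w) ('D_w h)); last exact: C1.2.
  by apply: continuousD; [exact: cvg_cst | apply: continuousZr_tmp; exact: cvg_id].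
- rewrite -ltr_norml => /xdW/h_orbit[g ->]; exists g.
  by rewrite mulmxDr -scalemxAr addrAC.
by exists g => t td; rewrite hg -?ltr_norml // mulmxDr -scalemxAr addrAC.
Qed.

Lemma derive_dir_on_segment x w d : 0 < d -> (forall t, `|t| < d -> W (x + t *: w)) ->
  exists g, [/\ h x = A g *m x + b g, 'D_w h x = A g *m w &
    forall t, `|t| < d -> h (x + t *: w) = h x + t *: 'D_w h x].
Proof.
move=> d0 xdW; have [g hg] := affine_on_segment d0 xdW.
have hx : h x = A g *m x + b g by have := hg 0; rewrite normr0 scale0r addr0; apply.
have hl t : `|t| < d -> h (x + t *: w) = h x + t *: (A g *m w).
  by move=> td; rewrite hg // hx mulmxDr -scalemxAr addrAC.
have [_ Dw] := derive_affine_line d0 hl.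
by exists g; split => //; rewrite Dw.
Qed.

Lemma derive_dir_orbit x w : W x ->
  exists g, h x = A g *m x + b g /\ 'D_w h x = A g *m w.
Proof.
move=> /W_line-/(_ w)[d d0 xdW]; have [g [hx Dw _]] := derive_dir_on_segment d0 xdW.
by exists g.
Qed.

Lemma derive_dir_cst w x y : W x -> W y -> 'D_w h x = 'D_w h y.
Proof.
move=> Wx Wy; apply: (@connected_countable_image_cst _ _ _ _ ('D_w h) cW _ _ _ _ Wx Wy).
  by move=> z Wz; exact: C1.2.
apply: sub_countable (countable_image (fun g => A g *m w) cG).
apply: subset_card_le => _ [z Wz <-].
by have [g [_ Dw]] := derive_dir_orbit w Wz; exists g.
Qed.

Lemma deriveZ_dir x k w : W x -> 'D_(k *: w) h x = k *: 'D_w h x.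
Proof.
move=> /W_line-/(_ w)[d d0 xdW]; have [g [_ _ hl]] := derive_dir_on_segment d0 xdW.
have k1 : 0 < `|k| + 1 by rewrite ltr_wpDl.
have dk0 : 0 < d / (`|k| + 1) by rewrite divr_gt0.
apply: (derive_affine_line dk0 _).2 => t tdk.
rewrite scalerA hl ?scalerA // normrM.
rewrite ltr_pdivlMr // in tdk; apply: le_lt_trans tdk.
by rewrite ler_wpM2l // lerDl.
Qed.

Lemma h_translate x r u : ball x r `<=` W -> `|u| < r / 2 -> h (x + u) = h x + 'D_u h x.
Proof.
move=> xrW ur.
have [|t t2|g [_ _ hl]] := @derive_dir_on_segment x u 2 _ _; first by [].
  apply: xrW; rewrite -ball_normE /= opprD addNKr normrN normrZ.
  by have := normr_ge0 u; have := normr_ge0 t; nra.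
by have := hl 1; rewrite normr1 !scale1r; apply; rewrite ltr1n.
Qed.

Lemma deriveD_dir x v w : W x -> 'D_(v + w) h x = 'D_v h x + 'D_w h x.
Proof.
move=> Wx; have [r r0 xrW] := W_ball Wx.
have vw1 : 0 < `|v| + `|w| + 1 by rewrite ltr_wpDl // addr_ge0.
pose e := r / (4 * (`|v| + `|w| + 1)).
have e0 : 0 < e by rewrite divr_gt0 // mulr_gt0.
have eS : e * (`|v| + `|w| + 1) = r / 4.
  by rewrite /e; field; rewrite gt_eqF.
have nv := normr_ge0 v; have nw := normr_ge0 w.
have ev : `|e *: v| < r / 4 by rewrite normrZ gtr0_norm //; nra.
have ew : `|e *: w| < r / 4 by rewrite normrZ gtr0_norm //; nra.
have ev_ew : `|e *: v + e *: w| < r / 2.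
  by apply: le_lt_trans (ler_normD _ _) _; lra.
have yrW : ball (x + e *: v) (r / 2) `<=` W.
  move=> z; rewrite -ball_normE /= => yz; apply: xrW; rewrite -ball_normE /=.
  have -> : x - z = (x + e *: v - z) - e *: v by rewrite addrAC addrK.
  by apply: le_lt_trans (ler_normB _ _) _; lra.
have Wy : W (x + e *: v) by apply/yrW/ballxx; rewrite divr_gt0.
(* Expand h (x + e v + e w) from x and from x + e v, where D_(e w) h agrees. *)
have := h_translate xrW ev_ew.
rewrite addrA (h_translate yrW (u := e *: w)); last by lra.
rewrite (h_translate xrW (u := e *: v)); last by lra.
rewrite (derive_dir_cst _ Wy Wx) -addrA => /addrI.
rewrite -scalerDr !deriveZ_dir // -scalerDr.
by move/(scalerI (lt0r_neq0 e0)).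
Qed.

Definition jacobian_col x := \matrix_(i, j) ('D_(delta_mx j 0) h x) i 0.

Lemma derive_dir_mulmx x w : W x -> 'D_w h x = jacobian_col x *m w.
Proof.
move=> Wx; have -> : 'D_w h x = \sum_(j < n) w j 0 *: 'D_(delta_mx j 0) h x.
  rewrite {1}[w]matrix_sum_delta.
  apply: (big_ind2 (fun u v => 'D_u h x = v)) => [|u1 v1 u2 v2 <- <-|j _].
  - by have := deriveZ_dir 0 0 Wx; rewrite !scale0r.
  - exact: deriveD_dir.
  - by rewrite big_ord1 deriveZ_dir.
apply/matrixP => i l; rewrite !mxE summxE; apply: eq_bigr => j _.
by rewrite !mxE (ord1 l) mulrC.
Qed.

Lemma jacobian_col_orbit x : W x -> exists g, A g = jacobian_col x /\ h x = A g *m x + b g.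
Proof.
move=> Wx; pose C g := [set w | (A g - jacobian_col x) *m w = h x - (A g *m x + b g)].
have [g|||w _|g [z [e [e0 zeC]]]] := @Baire_closed_cover _ _ _ C setT cG.
- exact: closed_mulmx_eq.
- exact: openT.
- by exists 0.
- have [g [hx Dw]] := derive_dir_orbit w Wx; exists g => //.
  by rewrite /C /= mulmxBl -Dw -derive_dir_mulmx // hx !subrr.
have [/eqP AJ /eqP hx] := mulmx_cst_on_ball e0 zeC.
by exists g; split; apply/eqP; rewrite -subr_eq0 // eq_sym -subr_eq0.
Qed.

Lemma h_affine x0 : W x0 -> exists g, forall x, W x -> h x = A g *m x + b g.
Proof.
move=> Wx0; have [g0 [AJ0 hx0]] := jacobian_col_orbit Wx0.
have JA x : W x -> jacobian_col x = A g0.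
  by move=> Wx; rewrite AJ0; apply/matrixP => i j; rewrite !mxE (derive_dir_cst _ Wx Wx0).
pose k x := h x - A g0 *m x.
have kC x : W x -> {for x, continuous k}.
  move=> Wx; have [r r0 xrW] := W_ball Wx.
  apply: (@near_cst_continuous _ _ (k x)); apply/nbhs_ballP.
  exists (r / 2) => [|y]; first by rewrite /= divr_gt0.
  rewrite -ball_normE /= distrC => yxr.
  rewrite /k -[y](subrKC x) (h_translate xrW yxr) derive_dir_mulmx // JA //.
  by rewrite [A g0 *m (x + _)]mulmxDr (addrC (A g0 *m x)) addrKA.
have kW : countable (k @` W).
  apply: sub_countable (countable_image b cG); apply: subset_card_le => _ [x Wx <-].
  have [g [AJ hx]] := jacobian_col_orbit Wx; exists g => //.
  by rewrite /k hx AJ JA // addrAC subrr add0r.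
exists g0 => x Wx; have := connected_countable_image_cst cW kC kW Wx Wx0.
by rewrite /k hx0 addrAC subrr add0r => /eqP; rewrite subr_eq addrC => /eqP.
Qed.

End orbit_preserving_maps.

Theorem lemma1 (R : realType) (n : nat) (G : groupType)
  (A : G -> 'M[R]_n) (b : G -> 'cV[R]_n)
  (W : set 'cV[R]_n) (h : 'cV[R]_n -> 'cV[R]_n) :
  countable [set: G] ->
  affine_action A b ->
  open W -> connected W ->
  C1_on W h ->
  (forall x, W x -> exists g : G, h x = A g *m x + b g) ->
  exists g : G, forall x, W x -> h x = A g *m x + b g.
Proof.
move=> cG _ oW cW C1 h_orbit.
have [[x0 Wx0]|W0] := pselect (W !=set0).
  exact: (h_affine cG oW cW C1 h_orbit Wx0).
by exists 1%g => x Wx; case: W0; exists x.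
Qed.
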